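(* Let $\chi:B_n\to D_n$ be the map with $\chi(w)=w$ if $w\in D_n$ and, if $w\notin D_n$, $\chi(w)$ is obtained from $w$ by changing the sign of its first entry $w_1$. The linear extension of $\chi$ maps $\Sigma(B_n)$ into $\Sigma(D_n)$, and the resulting map $\chi:\Sigma(B_n)\to\Sigma(D_n)$ is a morphism of algebras. Explicitly, for every $J\subseteq\{2,\dots,n-1\}$: $Y_J\mapsto Y_J$; $Y_{\{1\}\cup J}\mapsto Y_{\{1'\}\cup J}+Y_{\{1\}\cup J}+Y_{\{1',1\}\cup J}$; $Y_{\{0\}\cup J}\mapsto Y_J+Y_{\{1'\}\cup J}+Y_{\{1\}\cup J}$; $Y_{\{0,1\}\cup J}\mapsto Y_{\{1',1\}\cup J}$; equivalently, $X_J\mapsto X_J$; $X_{\{1\}\cup J}\mapsto X_{\{1',1\}\cup J}$; $X_{\{0\}\cup J}\mapsto X_{\{1'\}\cup J}+X_{\{1\}\cup J}$; $X_{\{0,1\}\cup J}\mapsto 2X_{\{1',1\}\cup J}$.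
   Context: Group algebras over $\mathbb{Q}$ with product composition. $B_n$: signed permutations $w=w_1\dots w_n$ (bijections of $\{\pm1,\dots,\pm n\}$ with $w(-i)=-w(i)$), values ordered $\cdots<-2<-1<1<2<\cdots$, $w_0=0$; $\mathrm{Des}(w)=\{i\in\{0,\dots,n-1\}:w_i>w_{i+1}\}$; in $\mathbb{Q}B_n$, $Y_J=\sum_{\mathrm{Des}(w)=J}w$ and $X_J=\sum_{I\subseteq J}Y_I$ for $J\subseteq\{0,\dots,n-1\}$; $\Sigma(B_n)=\mathrm{span}\{Y_J\}$. $D_n\subseteq B_n$: signed permutations with an even number of negative entries; the descent set of $w\in D_n$ is the subset of $\{1',1,2,\dots,n-1\}$ in which $1'$ is a descent iff $-w_1>w_2$ and $i\in[n-1]$ is a descent iff $w_i>w_{i+1}$; in $\mathbb{Q}D_n$, $Y_J=\sum_{\mathrm{Des}(w)=J}w$, $X_J=\sum_{I\subseteq J}Y_I$ for $J\subseteq\{1',1,\dots,n-1\}$, and $\Sigma(D_n)=\mathrm{span}\{Y_J\}$. *)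

From HB Require Import structures.
From mathcomp Require Import all_boot all_order all_fingroup all_algebra.
Set Implicit Arguments. Unset Strict Implicit. Unset Printing Implicit Defensive.
Import Order.TTheory GRing.Theory Num.Theory.
Local Open Scope ring_scope.

(* Signed permutations of [n]: a signed permutation w is encoded by the pair
   (s, e) with s : {perm 'I_n} and e : 'I_n -> bool, meaning that the entry in
   position i+1 (i : 'I_n) is  w_(i+1) = (-1)^(e i) * (s i + 1).
   Every bijection w of {+-1..+-n} with w(-i) = -w(i) is encoded uniquely. *)
Definition SP (n : nat) := ({perm 'I_n} * {ffun 'I_n -> bool})%type.

Definition ent n (w : SP n) (i : 'I_n) : int :=
  (if w.2 i then -1 else 1) * (nat_of_ord (w.1 i)).+1%:Z.

(* w_k for k : nat, with w_0 = 0 (and 0 out of range) *)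
Definition wv n (w : SP n) (k : nat) : int :=
  match k with
  | 0 => 0
  | k'.+1 => match (insub k' : option 'I_n) with Some i => ent w i | None => 0 end
  end.

Definition app n (w : SP n) (x : int) : int :=
  if 0 <= x then wv w `|x|%N else - wv w `|x|%N.

Definition is_comp n (w u v : SP n) : bool :=
  [forall i : 'I_n, ent w i == app u (ent v i)].

Definition sp1 n : SP n := (1%g, [ffun => false]).

(* rat^o is rat viewed as a left module over itself *)
Notation GA n := {ffun SP n -> rat^o} (only parsing).
Definition delta n (w : SP n) : GA n := [ffun v => (v == w)%:R].
Definition gmul n (f g : GA n) : GA n :=
  [ffun w => \sum_(p : SP n * SP n | is_comp w p.1 p.2) f p.1 * g p.2].
Definition gone n : GA n := delta (sp1 n).

(* Type B descents: Des(w) = {i in {0..n-1} : w_i > w_(i+1)}, w_0 = 0;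
   here i : 'I_n stands for i. *)
Definition DesB n (w : SP n) : {set 'I_n} := [set i : 'I_n | wv w i.+1 < wv w i].

Definition YB n (J : {set 'I_n}) : GA n := \sum_(w : SP n | DesB w == J) delta w.
Definition XB n (J : {set 'I_n}) : GA n := \sum_(I : {set 'I_n} | I \subset J) YB I.
Definition SigmaB n (f : GA n) : Prop :=
  exists c : {set 'I_n} -> rat, f = \sum_(J : {set 'I_n}) c J *: YB J.

(* D_n: signed permutations with an even number of negative entries.
   QD_n is viewed inside QB_n as the functions supported on D_n
   (D_n is a subgroup, so the product is the restriction of gmul). *)
Definition inD n (w : SP n) : bool := ~~ odd #|[set i : 'I_n | w.2 i]|.

(* Type D descent set, a subset of {1',1,...,n-1}.  ENCODING: i : 'I_n with
   val i = 0 stands for 1', and val i = k >= 1 stands for k. *)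
Definition DesD n (w : SP n) : {set 'I_n} :=
  [set i : 'I_n | if nat_of_ord i == 0%N then wv w 2 < - wv w 1
                  else wv w i.+1 < wv w i].

Definition YD n (J : {set 'I_n}) : GA n :=
  \sum_(w : SP n | inD w && (DesD w == J)) delta w.
Definition XD n (J : {set 'I_n}) : GA n := \sum_(I : {set 'I_n} | I \subset J) YD I.
Definition SigmaD n (f : GA n) : Prop :=
  exists c : {set 'I_n} -> rat, f = \sum_(J : {set 'I_n}) c J *: YD J.

Definition chi n (w : SP n) : SP n :=
  if inD w then w
  else (w.1, [ffun i : 'I_n => if nat_of_ord i == 0%N then ~~ w.2 i else w.2 i]).

Definition chiL n (f : GA n) : GA n := \sum_(w : SP n) f w *: delta (chi w).

Definition sN n (k : nat) : {set 'I_n} := [set i : 'I_n | nat_of_ord i == k].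
Arguments sN {n} k.

From HB Require Import structures.
From mathcomp Require Import all_boot all_order all_fingroup all_algebra.
From mathcomp Require Import zify.
Set Implicit Arguments. Unset Strict Implicit. Unset Printing Implicit Defensive.
Import Order.TTheory GRing.Theory Num.Theory.
Local Open Scope ring_scope.

(* For v in D_n the coefficient of v in chi(f) is f(v) + f(v s_0), where s_0 negates the
   value 1.  Des_B(v), Des_B(v s_0) and Des_D(v) all agree at positions >= 2, and at
   positions 0 and 1 they are determined by the relative order of w_1, w_2 and -w_1;
   this yields the explicit images of the Y_J and X_J, hence chi(Sigma(B_n)) <= Sigma(D_n).
   For multiplicativity, split f g (w) over factorisations w = u v according to the
   coset of u; the pairs with u outside D_n are reindexed by (u, v) |-> (u s_0, s_0 v).
   What is then needed of g is g(s_0 v) + g(s_0 v s_0) = g(v) + g(v s_0), which holds for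
   g in Sigma(B_n): changing the sign of the value 1 does not move a B-descent unless it
   sits in position 1, and then s_0 v = v s_0. *)

Lemma odd_card_set (T : finType) (P : pred T) :
  odd #|[set i | P i]| = \big[addb/false]_i P i.
Proof.
rewrite cardsE -sum1_card big_mkcond /=.
apply: (big_rec2 (fun m b => odd m = b)) => // i b m _ <-.
by rewrite oddD -[P i]/(i \in P); case: (i \in P).
Qed.

Lemma sum_delta (R : nzSemiRingType) (T : finType) (P : pred T) (x : T) :
  \sum_(y | P y) ((x == y)%:R : R) = (P x)%:R.
Proof.
case: (boolP (P x)) => Px.
  rewrite (bigD1 x) //= eqxx big1 ?addr0 // => y /andP[_ /negbTE].
  by rewrite eq_sym => ->.
by apply: big1 => y Py; case: eqP => // xy; rewrite xy Py in Px.
Qed.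

Section SignedPermutations.
Variable n : nat.
Implicit Types (u v w : SP n) (x : int) (f : GA n).

(* [rs0 w] and [ls0 w] are [w s_0] and [s_0 w], where [s_0] negates the value 1:
   they change the sign of the first entry, resp. of the entry of absolute value 1. *)
Definition rs0 w : SP n :=
  (w.1, [ffun i : 'I_n => if nat_of_ord i == 0%N then ~~ w.2 i else w.2 i]).
Definition ls0 w : SP n :=
  (w.1, [ffun i : 'I_n => if nat_of_ord (w.1 i) == 0%N then ~~ w.2 i else w.2 i]).
Definition s0z x : int := if `|x|%N == 1%N then - x else x.

Lemma chiE w : chi w = if inD w then w else rs0 w.
Proof. by []. Qed.

Lemma rs0K : involutive rs0.
Proof.
by case=> s e; congr pair; apply/ffunP => i; rewrite !ffunE; case: ifP => h; rewrite h ?negbK.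
Qed.

Lemma ls0K : involutive ls0.
Proof.
by case=> s e; congr pair; apply/ffunP => i; rewrite !ffunE; case: ifP => h; rewrite h ?negbK.
Qed.

Lemma rs0_ls0C w : rs0 (ls0 w) = ls0 (rs0 w).
Proof.
congr pair; apply/ffunP => i; rewrite !ffunE /=.
by case: (nat_of_ord i == 0%N); case: (nat_of_ord (w.1 i) == 0%N).
Qed.

Lemma abs_ent w i : `|ent w i|%N = (w.1 i).+1.
Proof. by rewrite /ent; case: (w.2 i); rewrite ?mulN1r ?mul1r ?abszN. Qed.

Lemma ent_ge0 w i : (0 <= ent w i) = ~~ w.2 i.
Proof. by rewrite /ent; case: (w.2 i); rewrite ?mulN1r ?mul1r. Qed.

Lemma wv_ent w (i : 'I_n) : wv w i.+1 = ent w i.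
Proof. by rewrite /= valK. Qed.

Lemma wv_out w k : (n <= k)%N -> wv w k.+1 = 0.
Proof. by move=> nk; rewrite /= insubF // ltnNge nk. Qed.

Lemma ent_rs0 w i : ent (rs0 w) i = if nat_of_ord i == 0%N then - ent w i else ent w i.
Proof.
rewrite /ent /= ffunE.
by case: (nat_of_ord i == 0%N); case: (w.2 i); rewrite /= ?mulN1r ?mul1r ?opprK.
Qed.

Lemma ent_ls0 w i : ent (ls0 w) i = s0z (ent w i).
Proof.
rewrite /s0z abs_ent eqSS /ent ffunE /=.
by case: (nat_of_ord (w.1 i) == 0%N); case: (w.2 i); rewrite /= ?mulN1r ?mul1r ?opprK.
Qed.

Lemma wv_rs0 w k : wv (rs0 w) k = if k == 1%N then - wv w k else wv w k.
Proof.
case: k => [|k] //; case: (ltnP k n) => [kn|nk]; last by rewrite !wv_out ?oppr0 ?if_same.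
by rewrite -[k]/(nat_of_ord (Ordinal kn)) !wv_ent ent_rs0.
Qed.

Lemma wv_ls0 w k : wv (ls0 w) k = s0z (wv w k).
Proof.
case: k => [|k] //; case: (ltnP k n) => [kn|nk]; last by rewrite !wv_out.
by rewrite -[k]/(nat_of_ord (Ordinal kn)) !wv_ent ent_ls0.
Qed.

Lemma appN u x : app u (- x) = - app u x.
Proof.
rewrite /app abszN oppr_ge0; have [->|x0] := eqVneq x 0; first by rewrite oppr0.
case: (lerP 0 x) => hx; last by rewrite ltW ?opprK.
by rewrite lt_geF // lt_def x0.
Qed.

Lemma app_rs0 u x : app (rs0 u) x = app u (s0z x).
Proof.
rewrite /s0z; case: ifP => [/eqP x1|x1]; last first.
  by rewrite /app !wv_rs0 x1.
by rewrite appN /app !wv_rs0 x1 /=; case: (lerP 0 x) => hx; rewrite ?opprK //; lia.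
Qed.

Lemma is_comp_rs0 w u v : is_comp (rs0 w) u (rs0 v) = is_comp w u v.
Proof.
apply: eq_forallb => i; rewrite !ent_rs0.
by case: ifP => // _; rewrite appN eqr_opp.
Qed.

Lemma is_comp_rs0_ls0 w u v : is_comp w (rs0 u) v = is_comp w u (ls0 v).
Proof. by apply: eq_forallb => i; rewrite ent_ls0 app_rs0. Qed.

Lemma app_ent u v i :
  app u (ent v i) = (if v.2 i (+) u.2 (v.1 i) then -1 else 1) * (u.1 (v.1 i)).+1%:Z.
Proof.
rewrite /app abs_ent wv_ent ent_ge0 /ent.
by case: (v.2 i); case: (u.2 (v.1 i)); rewrite /= ?mulN1r ?mul1r ?opprK.
Qed.

Lemma is_comp_sign w u v i : is_comp w u v -> w.2 i = v.2 i (+) u.2 (v.1 i).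
Proof.
move/forallP/(_ i)/eqP; rewrite app_ent /ent.
by case: (w.2 i); case: (_ (+) _); rewrite ?mulN1r ?mul1r //; lia.
Qed.

Lemma inD_comp w u v : is_comp w u v -> inD w = (inD u == inD v).
Proof.
move=> wuv; rewrite /inD !odd_card_set.
rewrite (eq_bigr (fun i => v.2 i (+) u.2 (v.1 i))) => [|i _]; last exact: is_comp_sign.
rewrite big_split /= [in RHS](reindex_inj (@perm_inj _ v.1)) /=.
by case: (\big[addb/false]_i v.2 i); case: (\big[addb/false]_i u.2 _).
Qed.

Lemma YBE J v : YB J v = (DesB v == J)%:R.
Proof. by rewrite /YB sum_ffunE; under eq_bigr do rewrite ffunE; apply: sum_delta. Qed.

Lemma YDE J v : YD J v = (inD v && (DesD v == J))%:R.
Proof. by rewrite /YD sum_ffunE; under eq_bigr do rewrite ffunE; apply: sum_delta. Qed.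

Lemma XBE J v : XB J v = (DesB v \subset J)%:R.
Proof.
rewrite /XB sum_ffunE; under eq_bigr do rewrite YBE.
exact: (sum_delta _ (fun I : {set _} => I \subset J)).
Qed.

Lemma XDE J v : XD J v = (inD v && (DesD v \subset J))%:R.
Proof.
rewrite /XD sum_ffunE; under eq_bigr do rewrite YDE.
case: (inD v) => /=; last by rewrite big1.
exact: (sum_delta _ (fun I : {set _} => I \subset J)).
Qed.

Lemma SigmaB_desc f : SigmaB f -> exists c : {set 'I_n} -> rat, forall v, f v = c (DesB v).
Proof.
case=> c ->; exists c => v; rewrite sum_ffunE.
under eq_bigr do rewrite ffunE YBE [_ *: _]mulr_natr mulrb eq_sym.
by rewrite -big_mkcond big_pred1_eq.
Qed.

Lemma SigmaD_desc f (d : {set 'I_n} -> rat) :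
  (forall v, f v = if inD v then d (DesD v) else 0) -> SigmaD f.
Proof.
move=> fE; exists d; apply/ffunP => v; rewrite fE sum_ffunE.
under eq_bigr do rewrite ffunE YDE [_ *: _]mulr_natr mulrb.
case: (inD v) => /=; last by rewrite big1.
under eq_bigr do rewrite eq_sym.
by rewrite -big_mkcond big_pred1_eq.
Qed.

End SignedPermutations.

Section TwoOrMore.
Variable n : nat.
Hypothesis n_gt1 : (1 < n)%N.
Implicit Types (u v w : SP n) (f g : GA n).

Let i0 : 'I_n := Ordinal (ltnW n_gt1).
Let i1 : 'I_n := Ordinal n_gt1.

Lemma inD_rs0 w : inD (rs0 w) = ~~ inD w.
Proof.
have only_i0 : \big[addb/false]_i (i == i0) = true.
  by rewrite (bigD1 i0) //= big1 => // i /negbTE.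
rewrite /inD !odd_card_set.
rewrite (eq_bigr (fun i => w.2 i (+) (i == i0))) => [|i _]; last first.
  by rewrite ffunE -val_eqE /=; case: eqP; rewrite ?addbT ?addbF.
by rewrite big_split /= only_i0 addbT.
Qed.

Lemma rs0_neq w : rs0 w != w.
Proof. by apply/eqP => e; have := inD_rs0 w; rewrite e; case: inD. Qed.

Lemma inD_chi w : inD (chi w).
Proof. by rewrite chiE; case: ifP => // wD; rewrite inD_rs0 wD. Qed.

Lemma chiLE f v : chiL f v = if inD v then f v + f (rs0 v) else 0.
Proof.
rewrite /chiL sum_ffunE.
under eq_bigr do rewrite !ffunE [_ *: _]mulr_natr mulrb.
rewrite -big_mkcond /=; case: ifP => vD; last first.
  by rewrite big_pred0 // => w; apply: contraFF vD => /eqP->; apply: inD_chi.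
have chi_v : chi v = v by rewrite chiE vD.
have chi_rs0v : chi (rs0 v) = v by rewrite chiE inD_rs0 vD rs0K.
rewrite (bigD1 v) /=; last by rewrite chi_v.
rewrite (bigD1 (rs0 v)) /=; last by rewrite chi_rs0v eqxx rs0_neq.
rewrite big_pred0 ?addr0 // => w; rewrite chiE.
case: ifP => _; [rewrite eq_sym | rewrite -(can_eq (@rs0K n)) rs0K];
  by case: eqP => [->|]; rewrite ?eqxx ?andbF.
Qed.

Definition set01 (a b : bool) (S : {set 'I_n}) : {set 'I_n} :=
  [set i : 'I_n | if nat_of_ord i == 0%N then a
                  else if nat_of_ord i == 1%N then b else i \in S].

Lemma in_set01_ge2 a b S (i : 'I_n) : (2 <= i)%N -> (i \in set01 a b S) = (i \in S).
Proof. by move=> i2; rewrite inE ifN_eq ?ifN_eq //; lia. Qed.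

Lemma in_set01_0 a b S : (i0 \in set01 a b S) = a. Proof. by rewrite inE. Qed.
Lemma in_set01_1 a b S : (i1 \in set01 a b S) = b. Proof. by rewrite inE. Qed.

Lemma set01_id a b c d S : set01 a b (set01 c d S) = set01 a b S.
Proof.
by apply/setP => i; rewrite !inE; case: (nat_of_ord i == 0%N); case: (nat_of_ord i == 1%N).
Qed.

Definition agree_ge2 (P : rel bool) (S S' : {set 'I_n}) :=
  [forall i : 'I_n, (2 <= i)%N ==> P (i \in S) (i \in S')].

Lemma forall_set01 (P : rel bool) a b S a' b' S' :
  [forall i, P (i \in set01 a b S) (i \in set01 a' b' S')] =
  [&& P a a', P b b' & agree_ge2 P S S'].
Proof.
apply/forallP/and3P => [H | [Pa Pb /forallP PS] i].
  split; [by have := H i0; rewrite !in_set01_0 | by have := H i1; rewrite !in_set01_1 |].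
  by apply/forallP => i; apply/implyP => i2; have := H i; rewrite !in_set01_ge2.
have [i_0|i_ne0] := eqVneq (nat_of_ord i) 0%N.
  by rewrite (_ : i = i0) ?in_set01_0 //; apply: val_inj.
have [i_1|i_ne1] := eqVneq (nat_of_ord i) 1%N.
  by rewrite (_ : i = i1) ?in_set01_1 //; apply: val_inj.
have i2 : (2 <= i)%N by lia.
by rewrite !in_set01_ge2 //; apply: (implyP (PS i)).
Qed.

Lemma set01_eq a b S a' b' S' :
  (set01 a b S == set01 a' b' S') = [&& a == a', b == b' & agree_ge2 eq_op S S'].
Proof.
rewrite -forall_set01; apply/eqP/forallP => [-> i // | E].
by apply/setP => i; apply/eqP/E.
Qed.

Lemma set01_sub a b S a' b' S' :
  (set01 a b S \subset set01 a' b' S') = [&& a ==> a', b ==> b' & agree_ge2 implb S S'].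
Proof. by rewrite -forall_set01; apply/subsetP/forallP => H i; apply/implyP/H. Qed.

Lemma DesB_set01 u : DesB u = set01 (wv u 1 < 0) (wv u 2 < wv u 1) (DesB u).
Proof. by apply/setP => -[[|[|k]] kn]; rewrite !inE. Qed.

Lemma DesB_rs0 u : DesB (rs0 u) = set01 (0 < wv u 1) (wv u 2 < - wv u 1) (DesB u).
Proof. by apply/setP => -[[|[|k]] kn]; rewrite !inE !wv_rs0 //= oppr_lt0. Qed.

Lemma DesD_set01 u : DesD u = set01 (wv u 2 < - wv u 1) (wv u 2 < wv u 1) (DesB u).
Proof. by apply/setP => -[[|[|k]] kn]; rewrite !inE. Qed.

Lemma wv1_neq0 u : wv u 1 != 0.
Proof. by rewrite -[1%N]/(nat_of_ord i0).+1 wv_ent -normr_gt0 -abszE abs_ent. Qed.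

(* The side condition holds because w_1 < -w_1 exactly when w_1 < 0. *)
Lemma descents_at01 u : exists a b b' : bool,
  [/\ DesB u = set01 a b (DesB u), DesB (rs0 u) = set01 (~~ a) b' (DesB u),
      DesD u = set01 b' b (DesB u) & if a then b ==> b' else b' ==> b].
Proof.
exists (wv u 1 < 0), (wv u 2 < wv u 1), (wv u 2 < - wv u 1).
have w1_pos : ~~ (wv u 1 < 0) = (0 < wv u 1) by have := wv1_neq0 u; lia.
rewrite -DesD_set01 -DesB_set01 w1_pos -DesB_rs0; split => //.
by case: ltP => w1_neg; apply/implyP; lia.
Qed.

Lemma s0z_lt x y : x != 0 -> y != 0 -> `|x|%N != `|y|%N ->
  (s0z y < s0z x) = (y < x).
Proof. by rewrite /s0z => *; do 2 case: ifP => /eqP ?; lia. Qed.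

Lemma DesB_ls0 v : nat_of_ord (v.1 i0) != 0%N -> DesB (ls0 v) = DesB v.
Proof.
move=> v1_ne0; apply/setP => -[[|k] kn]; rewrite !inE !wv_ls0.
  rewrite /s0z -[1%N]/(nat_of_ord i0).+1 wv_ent abs_ent.
  by rewrite eqSS (negbTE v1_ne0).
have k_lt : (k < n)%N by apply: ltnW.
rewrite wv_ent (wv_ent v (Ordinal k_lt) : wv v (Ordinal kn) = _).
apply: s0z_lt; rewrite -?normr_gt0 -?abszE ?abs_ent //.
by rewrite eqSS val_eqE (inj_eq perm_inj) -val_eqE /= ltn_eqF.
Qed.

Lemma ls0_rs0 v : nat_of_ord (v.1 i0) = 0%N -> ls0 v = rs0 v.
Proof.
move=> v1_0; congr pair; apply/ffunP => i; rewrite !ffunE.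
suff -> : (nat_of_ord (v.1 i) == 0%N) = (i == i0) by [].
by rewrite -{1}v1_0 val_eqE (inj_eq perm_inj).
Qed.

Lemma SigmaB_ls0 g v : SigmaB g -> g (ls0 v) + g (rs0 (ls0 v)) = g v + g (rs0 v).
Proof.
case/SigmaB_desc => c gE; rewrite !gE.
have [v1_0|v1_ne0] := eqVneq (nat_of_ord (v.1 i0)) 0%N.
  by rewrite ls0_rs0 // rs0K addrC.
by rewrite rs0_ls0C !DesB_ls0.
Qed.

Lemma gmul_rs0 f g w :
  gmul f g (rs0 w) = \sum_(p | is_comp w p.1 p.2) f p.1 * g (rs0 p.2).
Proof.
have rs0_2K : involutive (fun p : SP n * SP n => (p.1, rs0 p.2)).
  by case=> u v; rewrite /= rs0K.
rewrite ffunE (reindex_inj (inv_inj rs0_2K)) /=.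
by apply: eq_bigl => p; rewrite is_comp_rs0.
Qed.

Lemma sum_comp_notD (F : SP n -> SP n -> rat) w :
  \sum_(p | is_comp w p.1 p.2 && ~~ inD p.1) F p.1 p.2 =
  \sum_(p | is_comp w p.1 p.2 && inD p.1) F (rs0 p.1) (ls0 p.2).
Proof.
have rs0_ls0K : involutive (fun p : SP n * SP n => (rs0 p.1, ls0 p.2)).
  by case=> u v; rewrite /= rs0K ls0K.
rewrite (reindex_inj (inv_inj rs0_ls0K)) /=.
by apply: eq_bigl => p; rewrite is_comp_rs0_ls0 ls0K inD_rs0 negbK.
Qed.

Lemma chiL_gmul f g : SigmaB g -> chiL (gmul f g) = gmul (chiL f) (chiL g).
Proof.
move=> gB; apply/ffunP => w; rewrite chiLE [RHS]ffunE.
under [RHS]eq_bigr do rewrite !chiLE.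
case: ifP => wD; last first.
  symmetry; apply: big1 => -[u v] /= wuv; move: wD; rewrite (inD_comp wuv).
  by case: inD; case: inD; rewrite ?mul0r ?mulr0.
rewrite gmul_rs0 ffunE -big_split /=.
under eq_bigr do rewrite -mulrDr.
rewrite (bigID (fun p => inD p.1)) /=.
rewrite (sum_comp_notD (fun u v => f u * (g v + g (rs0 v)))) -big_split /=.
under eq_bigr do rewrite SigmaB_ls0 // -mulrDl.
rewrite [RHS](bigID (fun p => inD p.1)) /= [X in _ + X]big1 ?addr0; last first.
  by move=> p /andP[_ /negbTE ->]; rewrite mul0r.
apply: eq_bigr => -[u v] /andP[wuv uD] /=.
have vD : inD v by move: wD; rewrite (inD_comp wuv) uD; case: inD.
by rewrite uD vD.
Qed.

Lemma SigmaD_chiL f : SigmaB f -> SigmaD (chiL f).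
Proof.
case/SigmaB_desc => c fE.
(* Des_D v fixes b = [1 \in Des_D v] and b' = [1' \in Des_D v]; these determine
   a = [w_1 < 0] unless b = b', and then the two summands are symmetric in a. *)
pose d (K : {set 'I_n}) := let a := (i0 \in K) && (i1 \notin K) in
  c (set01 a (i1 \in K) K) + c (set01 (~~ a) (i0 \in K) K).
apply: (SigmaD_desc (d := d)) => v; rewrite chiLE; case: ifP => // vD.
have [a [b [b' [Bv Brs0v Dv abb']]]] := descents_at01 v.
rewrite !fE /d {}Dv in_set01_0 in_set01_1 !set01_id {}Brs0v {}Bv !set01_id.
by move: abb'; case: a; case: b; case: b' => //= _; rewrite addrC.
Qed.

Lemma chiL_one : chiL (gone n) = gone n.
Proof.
have oneD : inD (sp1 n) by rewrite /inD odd_card_set big1 // => i _; rewrite ffunE.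
apply/ffunP => v; rewrite chiLE /gone !ffunE.
case: ifP => vD; last by case: eqP => // v1; rewrite v1 oneD in vD.
rewrite (_ : rs0 v == _ = false) ?addr0 //.
by apply/eqP => v1; have := inD_rs0 v; rewrite v1 vD oneD.
Qed.

Section LowDescents.
Variable J : {set 'I_n}.
Hypothesis J_ge2 : forall i : 'I_n, i \in J -> (2 <= i)%N.

Lemma set01_ge2 :
  [/\ J = set01 false false J, sN 1 :|: J = set01 false true J,
      sN 0 :|: J = set01 true false J & sN 0 :|: sN 1 :|: J = set01 true true J].
Proof.
split; apply/setP => i; rewrite !inE;
  have [i_0|i_ne0] := eqVneq (nat_of_ord i) 0%N; have [i_1|i_ne1] := eqVneq (nat_of_ord i) 1%N;
  rewrite //=; try lia; by case: (boolP (i \in J)) => // /J_ge2; lia.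
Qed.

Lemma chiL_YB :
  [/\ chiL (YB J) = YD J,
      chiL (YB (sN 1 :|: J)) = YD (sN 0 :|: J) + YD (sN 1 :|: J) + YD (sN 0 :|: sN 1 :|: J),
      chiL (YB (sN 0 :|: J)) = YD J + YD (sN 0 :|: J) + YD (sN 1 :|: J) &
      chiL (YB (sN 0 :|: sN 1 :|: J)) = YD (sN 0 :|: sN 1 :|: J)].
Proof.
have [-> -> -> ->] := set01_ge2; rewrite !set01_id.
split; apply/ffunP => u; rewrite chiLE ?ffunE !YBE !YDE; case: ifP => uD /=; rewrite ?addr0 //;
  have [a [b [b' [-> -> -> abb']]]] := descents_at01 u; rewrite !set01_id !set01_eq;
  case: (agree_ge2 _ _ _); move: abb'; by case: a; case: b; case: b'.
Qed.

Lemma chiL_XB :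
  [/\ chiL (XB J) = XD J,
      chiL (XB (sN 1 :|: J)) = XD (sN 0 :|: sN 1 :|: J),
      chiL (XB (sN 0 :|: J)) = XD (sN 0 :|: J) + XD (sN 1 :|: J) &
      chiL (XB (sN 0 :|: sN 1 :|: J)) = 2%:R *: XD (sN 0 :|: sN 1 :|: J)].
Proof.
have [-> -> -> ->] := set01_ge2; rewrite !set01_id.
split; apply/ffunP => u; rewrite chiLE ?ffunE !XBE !XDE; case: ifP => uD /=; rewrite ?addr0 ?scaler0 //;
  have [a [b [b' [-> -> -> abb']]]] := descents_at01 u; rewrite !set01_id !set01_sub;
  case: (agree_ge2 _ _ _); move: abb'; by case: a; case: b; case: b'.
Qed.

End LowDescents.

End TwoOrMore.

Theorem proposition2p1 (n : nat) (hn : (2 <= n)%N) :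
  (forall f : GA n, SigmaB f -> SigmaD (chiL f)) /\
  (forall f g : GA n, SigmaB f -> SigmaB g ->
     chiL (gmul f g) = gmul (chiL f) (chiL g)) /\
  chiL (gone n) = gone n /\
  (forall J : {set 'I_n}, (forall i : 'I_n, i \in J -> (2 <= i)%N) ->
     [/\ chiL (YB J) = YD J,
         chiL (YB (sN 1 :|: J)) = YD (sN 0 :|: J) + YD (sN 1 :|: J) + YD (sN 0 :|: sN 1 :|: J),
         chiL (YB (sN 0 :|: J)) = YD J + YD (sN 0 :|: J) + YD (sN 1 :|: J) &
         chiL (YB (sN 0 :|: sN 1 :|: J)) = YD (sN 0 :|: sN 1 :|: J)] /\
     [/\ chiL (XB J) = XD J,
         chiL (XB (sN 1 :|: J)) = XD (sN 0 :|: sN 1 :|: J),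
         chiL (XB (sN 0 :|: J)) = XD (sN 0 :|: J) + XD (sN 1 :|: J) &
         chiL (XB (sN 0 :|: sN 1 :|: J)) = 2%:R *: XD (sN 0 :|: sN 1 :|: J)]).
Proof.
split; first exact: SigmaD_chiL hn.
split; first by move=> f g _; apply: chiL_gmul hn f g.
split; first exact: chiL_one hn.
by move=> J J_ge2; split; [apply: chiL_YB J_ge2 | apply: chiL_XB J_ge2].
Qed.
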